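(* For every positive integer $k$ there exist $\delta_k>0$ and $\rho_k>0$ depending only on $k$ such that: if $s<t$ are real and $f:[s,t)\to\mathbb{R}$ is $k$-regular, then there is an interval $J\subset[s,t)$ with $|J|>\delta_k(t-s)$ and $\inf_{x\in J}|f'(x)|\ge\rho_k\sup_{x\in[s,t)}|f'(x)|$.
   Context: For an integer $k\ge0$, a map $f:[s,t)\to\mathbb{R}$ is $k$-regular if $f$ is $C^k$ and $\sup_{x\in[s,t)}|f^{(k)}(x)|\le2\inf_{x\in[s,t)}|f^{(k)}(x)|$. *)

From Stdlib Require Import Reals Lra.
Open Scope R_scope.

Definition in_Ico (s t x : R) : Prop := s <= x /\ x < t.

Definition deriv_within (s t : R) (g : R -> R) (x l : R) : Prop :=
  forall eps, 0 < eps -> exists del, 0 < del /\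
    forall y, in_Ico s t y -> 0 < Rabs (y - x) < del ->
      Rabs ((g y - g x) / (y - x) - l) < eps.

Definition cont_within (s t : R) (g : R -> R) (x : R) : Prop :=
  forall eps, 0 < eps -> exists del, 0 < del /\
    forall y, in_Ico s t y -> Rabs (y - x) < del -> Rabs (g y - g x) < eps.

Definition Ck_derivs (k : nat) (f : R -> R) (s t : R) (D : nat -> R -> R)
  : Prop :=
  (forall x, in_Ico s t x -> D 0%nat x = f x) /\
  (forall j x, (j < k)%nat -> in_Ico s t x -> deriv_within s t (D j) x (D (S j) x)) /\
  (forall x, in_Ico s t x -> cont_within s t (D k) x).

(* f is k-regular on [s,t) (with derivatives D):
   C^k and sup |f^(k)| <= 2 inf |f^(k)| over [s,t), written pointwise. *)
Definition k_regular_with (k : nat) (f : R -> R) (s t : R) (D : nat -> R -> R)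
  : Prop :=
  Ck_derivs k f s t D /\
  (forall x y, in_Ico s t x -> in_Ico s t y -> Rabs (D k x) <= 2 * Rabs (D k y)).

Definition k_regular (k : nat) (f : R -> R) (s t : R) : Prop :=
  exists D, k_regular_with k f s t D.

(* Write E j := f^(j+1).  The hypothesis says that E 0, ..., E (k-1) is a
   "regular chain": each E j is differentiable on [s,t) with derivative
   E (j+1), and the last one is continuous with |E (k-1)| constant up to a
   factor 2.  We prove by induction on the length n of a regular chain that
   E 0 is, on some subinterval J of relative length delta_n, bounded below
   by rho_n times its values on all of [s,t).
   - n = 0: take J = [s,t); the factor-2 condition gives rho_0 = 1/2.
   - n -> n+1: apply the induction hypothesis to the tail chain, getting an
     interval (a,b) on which |g'| is comparable to sup |g'|, where g = E 0.
     On (a,b), g is strictly monotone at a definite rate, so |g| is large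
     on one of the two outer quarters of (a,b); on the other hand, by the
     mean value inequality, |g| varies by at most sup |g'| * (t-s) on
     [s,t).  Comparing the two gives the next pair (delta/4, rho').
   The first part of the file establishes the needed calculus facts for
   derivatives taken within [s,t) (mean value theorem, continuity,
   Lipschitz bound); then comes the combinatorial quarter argument, the
   inductive step, and finally the theorem (the case n = k - 1). *)

From Stdlib Require Import Reals Lra Lia Classical.
Open Scope R_scope.

(* At an interior point of [s,t), a derivative within [s,t) is an ordinary
   derivative; this lets us use the Stdlib mean value theorem. *)
Lemma deriv_within_interior s t g x l :
  s < x < t -> deriv_within s t g x l -> derivable_pt_lim g x l.
Proof.
  intros Hx Hd eps Heps.
  destruct (Hd eps Heps) as [del [Hdel Hclose]].
  assert (Hmin : 0 < Rmin del (Rmin (x - s) (t - x))) by (repeat apply Rmin_pos; lra).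
  exists (mkposreal _ Hmin); intros h Hh Hlt; simpl in Hlt.
  pose proof (Rmin_l del (Rmin (x - s) (t - x))).
  pose proof (Rmin_r del (Rmin (x - s) (t - x))).
  pose proof (Rmin_l (x - s) (t - x)).
  pose proof (Rmin_r (x - s) (t - x)).
  destruct (Rabs_def2 _ _ Hlt) as [Hhi Hlo].
  specialize (Hclose (x + h)); replace (x + h - x) with h in Hclose by ring.
  apply Hclose; [unfold in_Ico; lra|].
  split; [apply Rabs_pos_lt; exact Hh | lra].
Qed.

Lemma deriv_within_cont s t g x l :
  deriv_within s t g x l -> cont_within s t g x.
Proof.
  intros Hd eps Heps.
  destruct (Hd 1 Rlt_0_1) as [del [Hdel Hclose]].
  set (B := Rabs l + 1).
  assert (HB : 0 < B) by (pose proof (Rabs_pos l); unfold B; lra).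
  exists (Rmin del (eps / B)); split.
  { apply Rmin_pos; [lra | apply Rdiv_lt_0_compat; lra]. }
  intros y Hy Hyx.
  pose proof (Rmin_l del (eps / B)); pose proof (Rmin_r del (eps / B)).
  destruct (Req_dec y x) as [->|Hne].
  { replace (g x - g x) with 0 by ring; rewrite Rabs_R0; lra. }
  assert (Hq : Rabs ((g y - g x) / (y - x) - l) < 1).
  { apply Hclose; [exact Hy | split; [apply Rabs_pos_lt; lra | lra]]. }
  assert (Hslope : Rabs (g y - g x) <= B * Rabs (y - x)).
  { replace (g y - g x) with (((g y - g x) / (y - x) - l) * (y - x) + l * (y - x))
      by (field; lra).
    eapply Rle_trans; [apply Rabs_triang|].
    rewrite !Rabs_mult; unfold B.
    pose proof (Rabs_pos (y - x)); nra. }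
  assert (Hsmall : B * Rabs (y - x) < eps).
  { replace eps with (B * (eps / B)) by (field; lra).
    apply Rmult_lt_compat_l; lra. }
  lra.
Qed.

Lemma mvt_within s t g g' u v :
  s < u -> u < v -> v < t ->
  (forall x, in_Ico s t x -> deriv_within s t g x (g' x)) ->
  exists c, u < c < v /\ g v - g u = g' c * (v - u).
Proof.
  intros Hu Huv Hv Hd.
  destruct (MVT_cor2 g g' u v Huv) as [c [Heq Hc]].
  { intros c Hc; apply (deriv_within_interior s t); [lra|].
    apply Hd; unfold in_Ico; lra. }
  exists c; split; assumption.
Qed.

Section Lipschitz.

Variables (s t K : R) (g g' : R -> R).
Hypothesis deriv_g : forall x, in_Ico s t x -> deriv_within s t g x (g' x).
Hypothesis bound_g' : forall x, in_Ico s t x -> Rabs (g' x) <= K.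

Lemma lipschitz_interior u v :
  s < u -> u <= v -> v < t -> Rabs (g v - g u) <= K * (v - u).
Proof.
  intros Hu Huv Hv.
  destruct (Req_dec u v) as [<-|Hne].
  { replace (g u - g u) with 0 by ring; rewrite Rabs_R0, Rminus_diag_eq by reflexivity; lra. }
  destruct (mvt_within s t g g' u v) as [c [Hc ->]]; try lra; auto.
  rewrite Rabs_mult, (Rabs_right (v - u)) by lra.
  apply Rmult_le_compat_r; [lra|]. apply bound_g'; unfold in_Ico; lra.
Qed.

(* The endpoint u = s is reached by continuity of g at s. *)
Lemma lipschitz_Ico u v :
  s <= u -> u <= v -> v < t -> Rabs (g v - g u) <= K * (v - u).
Proof.
  intros Hu Huv Hv.
  destruct (Rlt_le_dec s u) as [Hsu|Hus]; [now apply lipschitz_interior|].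
  replace u with s in * by lra.
  destruct (Req_dec s v) as [<-|Hne].
  { replace (g s - g s) with 0 by ring; rewrite Rabs_R0, Rminus_diag_eq by reflexivity; lra. }
  assert (HK : 0 <= K).
  { eapply Rle_trans; [apply Rabs_pos | apply (bound_g' s); unfold in_Ico; lra]. }
  apply Rle_plus_epsilon; intros eps Heps.
  destruct (deriv_within_cont s t g s (g' s) (deriv_g s ltac:(unfold in_Ico; lra)) eps Heps)
    as [del [Hdel Hcont]].
  set (z := s + Rmin (del / 2) ((v - s) / 2)).
  pose proof (Rmin_l (del / 2) ((v - s) / 2)); pose proof (Rmin_r (del / 2) ((v - s) / 2)).
  assert (Hmin : 0 < Rmin (del / 2) ((v - s) / 2)) by (apply Rmin_pos; lra).
  assert (Hz : s < z < v) by (unfold z; lra).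
  assert (Hnear : Rabs (g z - g s) < eps).
  { apply Hcont; [unfold in_Ico; lra|].
    rewrite Rabs_right; unfold z; lra. }
  assert (Hfar : Rabs (g v - g z) <= K * (v - z)) by (apply lipschitz_interior; lra).
  replace (g v - g s) with ((g v - g z) + (g z - g s)) by ring.
  pose proof (Rabs_triang (g v - g z) (g z - g s)); nra.
Qed.

Lemma lipschitz_within x y :
  in_Ico s t x -> in_Ico s t y -> Rabs (g x - g y) <= K * Rabs (x - y).
Proof.
  intros [Hx1 Hx2] [Hy1 Hy2].
  destruct (Rle_lt_dec y x) as [Hyx|Hxy].
  - rewrite (Rabs_right (x - y)) by lra; now apply lipschitz_Ico.
  - rewrite Rabs_minus_sym, (Rabs_minus_sym x y), (Rabs_right (y - x)) by lra.
    apply lipschitz_Ico; lra.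
Qed.

End Lipschitz.

Lemma growth_from_deriv s t g g' a b m :
  s <= a -> b <= t ->
  (forall x, in_Ico s t x -> deriv_within s t g x (g' x)) ->
  (forall y, a < y < b -> m <= Rabs (g' y)) ->
  forall u v, a < u -> u < v -> v < b -> m * (v - u) <= Rabs (g v - g u).
Proof.
  intros Ha Hb Hd Hm u v Hu Huv Hv.
  destruct (mvt_within s t g g' u v) as [c [Hc ->]]; try lra; auto.
  rewrite Rabs_mult, (Rabs_right (v - u)) by lra.
  apply Rmult_le_compat_r; [lra|]. apply Hm; lra.
Qed.

(* If g moves at rate m on (a,b), then |g| >= m (b-a)/8 on one of the two
   outer quarters of (a,b): a point where |g| is small in the first quarter
   is at distance >= (b-a)/2 from every point of the last quarter. *)
Lemma large_on_a_quarter (g : R -> R) a b m :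
  a < b -> 0 <= m ->
  (forall u v, a < u -> u < v -> v < b -> m * (v - u) <= Rabs (g v - g u)) ->
  exists a' b', a <= a' /\ b' <= b /\ b' - a' = (b - a) / 4 /\
    forall y, a' < y < b' -> m * (b - a) / 8 <= Rabs (g y).
Proof.
  intros Hab Hm Hgrow.
  destruct (classic (forall y, a < y < a + (b - a) / 4 -> m * (b - a) / 8 <= Rabs (g y)))
    as [Hfirst|Hfirst].
  { exists a, (a + (b - a) / 4); repeat split; try lra; exact Hfirst. }
  apply not_all_ex_not in Hfirst as [u Hu].
  apply imply_to_and in Hu as [Hu Hsmall]; apply Rnot_le_lt in Hsmall.
  exists (b - (b - a) / 4), b; repeat split; try lra.
  intros v Hv.
  pose proof (Hgrow u v ltac:(lra) ltac:(lra) ltac:(lra)) as Hmove.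
  assert (Htri : Rabs (g v - g u) <= Rabs (g v) + Rabs (g u)).
  { unfold Rminus; rewrite <- (Rabs_Ropp (g u)); apply Rabs_triang. }
  nra.
Qed.

(* The comparability constant produced by one inductive step. *)
Definition step_ratio (delta rho : R) : R :=
  rho * rho * delta / (rho * rho * delta + 8).

Lemma step_ratio_pos delta rho : 0 < delta -> 0 < rho -> 0 < step_ratio delta rho.
Proof.
  intros Hd Hr; unfold step_ratio.
  assert (0 < rho * rho * delta) by (apply Rmult_lt_0_compat; [nra | lra]).
  apply Rdiv_lt_0_compat; lra.
Qed.

Lemma step_ratio_bound delta rho X Y C :
  0 < delta -> 0 < rho -> X <= Y + C / rho -> rho * delta * C <= 8 * Y ->
  step_ratio delta rho * X <= Y.
Proof.
  intros Hd Hr HX HC; unfold step_ratio.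
  assert (Hpos : 0 < rho * rho * delta) by (apply Rmult_lt_0_compat; [nra | lra]).
  assert (Hkey : rho * rho * delta * X <= (rho * rho * delta + 8) * Y).
  { assert (Heq : rho * rho * delta * (C / rho) = rho * delta * C) by (field; lra).
    pose proof (Rmult_le_compat_l _ _ _ (Rlt_le _ _ Hpos) HX); nra. }
  apply (Rmult_le_reg_l (rho * rho * delta + 8)); [lra|].
  replace ((rho * rho * delta + 8) * (rho * rho * delta / (rho * rho * delta + 8) * X))
    with (rho * rho * delta * X) by (field; lra).
  exact Hkey.
Qed.

Lemma refine_interval s t (g g' : R -> R) a b delta rho :
  0 < delta -> 0 < rho -> s <= a -> a < b -> b <= t -> b - a > delta * (t - s) ->
  (forall x, in_Ico s t x -> deriv_within s t g x (g' x)) ->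
  (forall y x, a < y < b -> in_Ico s t x -> rho * Rabs (g' x) <= Rabs (g' y)) ->
  exists a' b', s <= a' /\ a' < b' /\ b' <= t /\ b' - a' > delta / 4 * (t - s) /\
    (forall y x, a' < y < b' -> in_Ico s t x ->
       step_ratio delta rho * Rabs (g x) <= Rabs (g y)).
Proof.
  intros Hd Hr Ha Hab Hb Hlen Hderiv Hcomp.
  set (A := Rabs (g' ((a + b) / 2))).
  assert (HA : 0 <= A) by apply Rabs_pos.
  assert (Hsup : forall x, in_Ico s t x -> Rabs (g' x) <= A / rho).
  { intros x Hx; apply (Rmult_le_reg_l rho); [lra|].
    replace (rho * (A / rho)) with A by (field; lra).
    apply Hcomp; [lra | exact Hx]. }
  assert (Hgrow := growth_from_deriv s t g g' a b (rho * A) Ha Hb Hderiv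
                     (fun y Hy => Hcomp y ((a + b) / 2) Hy ltac:(unfold in_Ico; lra))).
  destruct (large_on_a_quarter g a b (rho * A) Hab ltac:(nra) Hgrow)
    as [a' [b' [Ha' [Hb' [Hlen' Hlarge]]]]].
  exists a', b'; repeat split; try lra.
  intros y x Hy Hx.
  assert (Hy' : in_Ico s t y) by (unfold in_Ico; lra).
  pose proof (lipschitz_within s t (A / rho) g g' Hderiv Hsup x y Hx Hy') as Hlip.
  assert (Hdist : Rabs (x - y) <= t - s).
  { destruct Hx; unfold Rabs; destruct (Rcase_abs (x - y)); lra. }
  apply step_ratio_bound with (C := A * (t - s)); [lra | lra | |].
  - assert (HAr : 0 <= A / rho) by (apply Rmult_le_pos; [lra | apply Rlt_le, Rinv_0_lt_compat; lra]).
    replace (A * (t - s) / rho) with (A / rho * (t - s)) by (field; lra).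
    replace (g x) with ((g x - g y) + g y) by ring.
    pose proof (Rabs_triang (g x - g y) (g y)).
    pose proof (Rmult_le_compat_l _ _ _ HAr Hdist); lra.
  - pose proof (Hlarge y Hy).
    assert (0 <= rho * A) by nra. nra.
Qed.

Definition regular_chain (n : nat) (E : nat -> R -> R) (s t : R) : Prop :=
  (forall j x, (j < n)%nat -> in_Ico s t x -> deriv_within s t (E j) x (E (S j) x)) /\
  (forall x, in_Ico s t x -> cont_within s t (E n) x) /\
  (forall x y, in_Ico s t x -> in_Ico s t y -> Rabs (E n x) <= 2 * Rabs (E n y)).

Lemma k_regular_chain k f s t D :
  k_regular_with k f s t D -> regular_chain k D s t.
Proof. intros [[_ [Hderiv Hcont]] Hreg]; repeat split; assumption. Qed.

Lemma regular_chain_tail n E s t :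
  regular_chain (S n) E s t -> regular_chain n (fun j => E (S j)) s t.
Proof.
  intros [Hderiv [Hcont Hreg]]; repeat split; try assumption.
  intros j x Hj Hx; apply Hderiv; [lia | exact Hx].
Qed.

Definition comparable_interval (n : nat) : Prop :=
  exists delta rho : R, 0 < delta /\ 0 < rho /\
    forall s t (E : nat -> R -> R), s < t -> regular_chain n E s t ->
      exists a b : R, s <= a /\ a < b /\ b <= t /\ b - a > delta * (t - s) /\
        (forall y x, a < y < b -> in_Ico s t x -> rho * Rabs (E 0%nat x) <= Rabs (E 0%nat y)).

Lemma comparable_interval_0 : comparable_interval 0.
Proof.
  exists (1 / 2), (1 / 2); split; [lra | split; [lra|]].
  intros s t E Hst [_ [_ Hreg]].
  exists s, t; repeat split; try lra.
  intros y x Hy Hx; pose proof (Hreg x y Hx ltac:(unfold in_Ico; lra)); lra.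
Qed.

Lemma comparable_interval_S n :
  comparable_interval n -> comparable_interval (S n).
Proof.
  intros [delta [rho [Hd [Hr Hcomp]]]].
  exists (delta / 4), (step_ratio delta rho).
  split; [lra | split; [now apply step_ratio_pos|]].
  intros s t E Hst Hchain.
  destruct (Hcomp s t _ Hst (regular_chain_tail n E s t Hchain))
    as [a [b [Ha [Hab [Hb [Hlen HJ]]]]]].
  apply (refine_interval s t (E 0%nat) (E 1%nat) a b); try assumption.
  intros x Hx; apply (proj1 Hchain); [lia | exact Hx].
Qed.

Lemma comparable_interval_all n : comparable_interval n.
Proof.
  induction n; [exact comparable_interval_0 | now apply comparable_interval_S].
Qed.

Theorem mainTheorem18 :
  forall k : nat, (1 <= k)%nat ->
  exists delta rho : R, 0 < delta /\ 0 < rho /\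
    forall (s t : R) (f : R -> R) (D : nat -> R -> R),
      s < t -> k_regular_with k f s t D ->
      exists a b : R, s <= a /\ a < b /\ b <= t /\
        b - a > delta * (t - s) /\
        (forall y x, a < y < b -> in_Ico s t x ->
           rho * Rabs (D 1%nat x) <= Rabs (D 1%nat y)).
Proof.
  intros k Hk; destruct k as [|n]; [lia|].
  destruct (comparable_interval_all n) as [delta [rho [Hd [Hr Hcomp]]]].
  exists delta, rho; split; [exact Hd | split; [exact Hr|]].
  intros s t f D Hst Hreg.
  exact (Hcomp s t (fun j => D (S j)) Hst
           (regular_chain_tail n D s t (k_regular_chain (S n) f s t D Hreg))).
Qed.
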